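(* Let $\zeta_5=\exp(2\pi i/5)$, $K=\mathbb{Q}(\zeta_5)\subset\mathbb{C}$, $\mathcal{O}_K=\mathbb{Z}[\zeta_5]$, let $\sigma:K\to\mathbb{C}$ be the embedding with $\sigma(\zeta_5)=\zeta_5^2$, and let $\mathcal{S}=\{z\in\mathcal{O}_K : |\sigma(z)|\le 1\}$. If $z_1,z_2\in\mathcal{S}$ with $z_1\neq z_2$, then $|z_1-z_2|\ge\frac{\sqrt5-1}{2}$.
   Context: Elements of $K$ are regarded as complex numbers via the inclusion $K\subset\mathbb{C}$. *)

From mathcomp Require Import all_boot all_algebra.
From mathcomp Require Import all_classical all_reals all_analysis.
From mathcomp.real_closed Require Import complex.
Set Implicit Arguments. Unset Strict Implicit. Unset Printing Implicit Defensive.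
Import GRing.Theory Num.Theory.
Local Open Scope ring_scope.
Local Open Scope complex_scope.

Definition zeta5 (R : realType) : R[i] :=
  (cos (2 * pi / 5)) +i* (sin (2 * pi / 5)).

(* Elements of
   O_K = Z[zeta5] are exactly the values  evZ p zeta5,  p : {poly int};
   the embedding sigma (zeta5 |-> zeta5^2) sends evZ p zeta5 to
   evZ p (zeta5 ^+ 2). *)
Definition evZ (R : realType) (p : {poly int}) (x : R[i]) : R[i] :=
  (map_poly (fun a : int => a%:~R) p).[x].

From mathcomp Require Import all_boot all_algebra.
From mathcomp Require Import all_classical all_reals all_analysis.
From mathcomp.real_closed Require Import complex.
From mathcomp Require Import ring lra zify.
Set Implicit Arguments. Unset Strict Implicit. Unset Printing Implicit Defensive.
Import order.Order.TTheory GRing.Theory Num.Theory.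
Local Open Scope ring_scope.

(* Let w = z1 - z2, a nonzero element of Z[zeta5]. Writing w as an integer
   combination of 1, zeta5, ..., zeta5^4, both |w|^2 and |sigma(w)|^2 lie in
   Z[tau], tau = zeta5 + zeta5^4 = (sqrt 5 - 1)/2, and they are conjugate
   there: |w|^2 = A + B tau and |sigma(w)|^2 = A + B (-1 - tau).  Since
   |sigma(w)| <= 2, the conjugate lies in [0, 4], and a case analysis on the
   integer B shows that a positive A + B tau with this property is at least
   tau^2; hence |w| >= tau. *)

Definition horner5 (V : nzRingType) (e0 e1 e2 e3 e4 : int) (x : V) : V :=
  e0%:~R + e1%:~R * x + e2%:~R * x ^+ 2 + e3%:~R * x ^+ 3 + e4%:~R * x ^+ 4.

Lemma horner_int_root5 (V : comNzRingType) (p : {poly int}) :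
  exists e0 e1 e2 e3 e4 : int, forall x : V, x ^+ 5 = 1 ->
    (map_poly (fun a : int => a%:~R) p).[x] = horner5 e0 e1 e2 e3 e4 x.
Proof.
elim/poly_ind: p => [|q c [e0 [e1 [e2 [e3 [e4 IHq]]]]]].
  by exists 0, 0, 0, 0, 0 => x _; rewrite map_poly0 horner0 /horner5; ring.
exists (e4 + c), e0, e1, e2, e3 => x x5.
rewrite rmorphD rmorphM /= map_polyX map_polyC /= !hornerE IHq //.
have -> : horner5 e0 e1 e2 e3 e4 x * x + c%:~R =
    horner5 (e4 + c) e0 e1 e2 e3 x + e4%:~R * (x ^+ 5 - 1) by rewrite /horner5 intrD; ring.
by rewrite x5 subrr mulr0 addr0.
Qed.

Section RootOfUnity5.
Variables (F : idomainType) (x : F).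
Hypotheses (x5 : x ^+ 5 = 1) (x_neq1 : x != 1).

Lemma root5_sum : 1 + x + x ^+ 2 + x ^+ 3 + x ^+ 4 = 0.
Proof.
have : (x - 1) * (1 + x + x ^+ 2 + x ^+ 3 + x ^+ 4) = 0.
  have -> : (x - 1) * (1 + x + x ^+ 2 + x ^+ 3 + x ^+ 4) = x ^+ 5 - 1 by ring.
  by rewrite x5 subrr.
by move/eqP; rewrite mulf_eq0 subr_eq0 (negbTE x_neq1) => /eqP.
Qed.

Lemma root5_sqr : (x ^+ 2) ^+ 5 = 1.
Proof. by rewrite -exprM mulnC exprM x5 expr1n. Qed.

Lemma root5_sqr_neq1 : x ^+ 2 != 1.
Proof.
apply: contra x_neq1 => /eqP x2.
by rewrite -x5 (_ : 5 = 1 + 2 * 2)%N // exprD exprM x2 expr1n mulr1 expr1.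
Qed.

Lemma root5_trace_sqr : x ^+ 2 + (x ^+ 2) ^+ 4 = -1 - (x + x ^+ 4).
Proof.
rewrite -exprM (_ : 2 * 4 = 5 + 3)%N // exprD x5 mul1r.
by rewrite -[LHS]subr0 -root5_sum; ring.
Qed.

Lemma root5_trace_quadratic : (x + x ^+ 4) ^+ 2 + (x + x ^+ 4) - 1 = 0.
Proof.
have -> : (x + x ^+ 4) ^+ 2 + (x + x ^+ 4) - 1 =
    (x ^+ 5 - 1) * (x ^+ 3 + 2) + (1 + x + x ^+ 2 + x ^+ 3 + x ^+ 4) by ring.
by rewrite x5 root5_sum subrr mul0r addr0.
Qed.

End RootOfUnity5.

Lemma conj_root5 (C : numClosedFieldType) (x : C) : x ^+ 5 = 1 -> x^* = x ^+ 4.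
Proof.
move=> x5; have : `|x| = 1.
  by apply/eqP; rewrite -(pexpr_eq1 (_ : 0 < 5)%N (normr_ge0 x)) // -normrX x5 normr1.
move/(congr1 (fun r => r ^+ 2)); rewrite normCK expr1n => xx.
by rewrite -[LHS]mulr1 -x5 exprS mulrA [_^* * _]mulrC xx mul1r.
Qed.

Lemma sqr_norm_horner5 (C : numClosedFieldType) (e0 e1 e2 e3 e4 : int) :
  exists A B : int, forall x : C, x ^+ 5 = 1 -> x != 1 ->
    `|horner5 e0 e1 e2 e3 e4 x| ^+ 2 = A%:~R + B%:~R * (x + x ^+ 4).
Proof.
(* Conjugation is x |-> x^4, so w * w^* is a combination of 1, x + x^4 and
   x^2 + x^3 = -1 - (x + x^4); P1 and P2 are the cyclic autocorrelations. *)
pose P1 := e0 * e1 + e1 * e2 + e2 * e3 + e3 * e4 + e4 * e0.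
pose P2 := e0 * e2 + e1 * e3 + e2 * e4 + e3 * e0 + e4 * e1.
exists (e0 * e0 + e1 * e1 + e2 * e2 + e3 * e3 + e4 * e4 - P2), (P1 - P2).
move=> x x5 x_neq1.
have xk k : x ^+ (5 + k) = x ^+ k by rewrite exprD x5 mul1r.
rewrite normCK.
have -> : (horner5 e0 e1 e2 e3 e4 x)^* =
    e0%:~R + e4%:~R * x + e3%:~R * x ^+ 2 + e2%:~R * x ^+ 3 + e1%:~R * x ^+ 4.
  rewrite /horner5 !rmorphD !(rmorphM _ _%:~R) !rmorphXn !rmorph_int /= conj_root5 //.
  rewrite -!exprM.
  rewrite (_ : 4 * 2 = 5 + 3)%N // (_ : 4 * 3 = 5 + (5 + 2))%N //.
  rewrite (_ : 4 * 4 = 5 + (5 + (5 + 1)))%N // !xk expr1; ring.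
rewrite /horner5.
transitivity ((e0 * e0 + e1 * e1 + e2 * e2 + e3 * e3 + e4 * e4 - P2)%:~R
    + (P1 - P2)%:~R * (x + x ^+ 4) + (x ^+ 5 - 1) *
      ((e1 * e1 + e2 * e2 + e3 * e3 + e4 * e4)%:~R + (e2 * e1 + e3 * e2 + e4 * e3)%:~R * x
       + (e3 * e1 + e4 * e2)%:~R * x ^+ 2 + (e4 * e1)%:~R * x ^+ 3)
    + P2%:~R * (1 + x + x ^+ 2 + x ^+ 3 + x ^+ 4) : C).
  by rewrite /P1 /P2; ring.
by rewrite x5 root5_sum // subrr mul0r mulr0 !addr0.
Qed.

Local Open Scope complex_scope.

Section GoldenRatio.
Variable R : rcfType.
Local Notation tau := ((Num.sqrt 5 - 1) / 2 : R).

Lemma sqrt5_bounds : 2 < Num.sqrt (5 : R) < 3.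
Proof.
have s_ge0 : 0 <= Num.sqrt (5 : R) := sqrtr_ge0 _.
have s2 : Num.sqrt (5 : R) ^+ 2 = 5 by rewrite sqr_sqrtr.
apply/andP; split; nra.
Qed.

Lemma tau_sqr : tau ^+ 2 = 1 - tau.
Proof.
have s2 : Num.sqrt (5 : R) ^+ 2 = 5 by rewrite sqr_sqrtr.
have -> : ((Num.sqrt (5 : R) - 1) / 2) ^+ 2 = (Num.sqrt 5 ^+ 2 + 1 - 2 * Num.sqrt 5) / 4.
  by field.
by rewrite s2; field.
Qed.

Lemma tau_unique (u : R) : 0 < u -> u ^+ 2 + u - 1 = 0 -> u = tau.
Proof.
move=> u_gt0 hu; have := tau_sqr; have := sqrt5_bounds => /andP[s_gt2 _] t2.
nra.
Qed.

Lemma tau_sqr_le_int (A B : int) :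
  0 < A%:~R + B%:~R * tau -> 0 <= A%:~R + B%:~R * (-1 - tau) <= 4 ->
  tau ^+ 2 <= A%:~R + B%:~R * tau.
Proof.
move=> N_gt0 /andP[M_ge0 M_le4]; rewrite tau_sqr.
(* The two bounds differ by B sqrt 5, which forces B >= -1. *)
have /andP[s_gt2 s_lt3] := sqrt5_bounds.
have : (B <= -2)%R \/ B = -1 \/ B = 0 \/ (1 <= B)%R by lia.
case=> [B_le|[B_eq|[B_eq|B_ge]]].
- have : (B%:~R : R) <= (-2)%:~R by rewrite ler_int.
  rewrite intrN; nra.
- rewrite B_eq rmorphN1 in N_gt0 *.
  have A_gt0 : (0 < A)%R by rewrite -(ltr0z R); lra.
  have : 1 <= (A%:~R : R) by rewrite ler1z; lia.
  lra.
- rewrite B_eq mul0r addr0 in N_gt0 *.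
  have A_gt0 : (0 < A)%R by rewrite -(ltr0z R).
  have : 1 <= (A%:~R : R) by rewrite ler1z; lia.
  lra.
- have : 1 <= (B%:~R : R) by rewrite ler1z.
  nra.
Qed.

Lemma tau_le_norm (w v : R[i]) (A B : int) :
  `|w| ^+ 2 = A%:~R + B%:~R * tau%:C -> `|v| ^+ 2 = A%:~R + B%:~R * (-1 - tau%:C) ->
  `|v| <= 2 -> w != 0 -> tau%:C <= `|w|.
Proof.
have normc_real (z : R[i]) : exists2 n : R, 0 <= n & `|z| = n%:C.
  by exists (Num.sqrt (complex.Re z ^+ 2 + complex.Im z ^+ 2));
    [exact: sqrtr_ge0 | exact: normc_def].
have [n n_ge0 wn] := normc_real w; have [m m_ge0 vm] := normc_real v.
move=> Nw Nv; rewrite vm wn -(rmorph_nat (real_complex R) 2) !lecR => m_le2 w_neq0.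
have n2 : n ^+ 2 = A%:~R + B%:~R * tau.
  by apply: (@complexI R); rewrite rmorphXn /= -wn Nw rmorphD (rmorphM _ B%:~R) !rmorph_int.
have m2 : m ^+ 2 = A%:~R + B%:~R * (-1 - tau).
  by apply: (@complexI R); rewrite rmorphXn /= -vm Nv rmorphD (rmorphM _ B%:~R) rmorphB rmorphN1 !rmorph_int.
have n_neq0 : n != 0 by apply: contraNneq w_neq0 => n0; rewrite -normr_eq0 wn n0.
have /andP[s_gt2 _] := sqrt5_bounds.
have : tau ^+ 2 <= n ^+ 2.
  rewrite n2; apply: tau_sqr_le_int; rewrite -?n2 -?m2.
    by rewrite exprn_gt0 // lt0r n_neq0.
  by apply/andP; split; nra.
by rewrite ler_sqr ?nnegrE //; lra.
Qed.

End GoldenRatio.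

Section Zeta5.
Variable R : realType.
Local Notation th := (2 * pi / 5 : R).

Lemma zeta5X n : zeta5 R ^+ n = cos (n%:R * th) +i* sin (n%:R * th).
Proof.
elim: n => [|n IHn]; first by rewrite expr0 !mul0r cos0 sin0.
rewrite exprS IHn (_ : n.+1%:R * th = th + n%:R * th) ?cosD ?sinD.
  by congr Complex; ring.
by rewrite -addn1 natrD; ring.
Qed.

Lemma zeta5_root : zeta5 R ^+ 5 = 1.
Proof.
rewrite zeta5X (_ : 5%:R * th = pi *+ 2) ?cos2pi ?sin2pi //.
by rewrite mulr2n; field.
Qed.

Lemma zeta5_neq1 : zeta5 R != 1.
Proof.
have : 0 < sin th by apply: sin_gt0_pi; have := pi_gt0 R => pi_gt0; apply/andP; split; lra.
by rewrite eq_complex /= negb_and => /lt0r_neq0 ->; rewrite orbT.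
Qed.

Lemma zeta5_trace : zeta5 R + zeta5 R ^+ 4 = ((Num.sqrt 5 - 1) / 2)%:C.
Proof.
have trace_cos : zeta5 R + zeta5 R ^+ 4 = (2 * cos th)%:C.
  rewrite -conj_root5 ?zeta5_root //.
  by apply/eqP; rewrite eq_complex /=; apply/andP; split; apply/eqP; ring.
rewrite trace_cos; congr (_%:C); apply: tau_unique.
  rewrite mulr_gt0 // cos_gt0_pihalf //; have := pi_gt0 R => pi_gt0; apply/andP; split; lra.
apply: (@complexI R).
rewrite rmorphB rmorphD rmorphXn rmorph1 rmorph0 /= -trace_cos.
exact: root5_trace_quadratic (zeta5_root) (zeta5_neq1).
Qed.

End Zeta5.

Lemma evZB (R : realType) (p q : {poly int}) (x : R[i]) :
  evZ p x - evZ q x = evZ (p - q) x.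
Proof. by rewrite /evZ rmorphB hornerD hornerN. Qed.

Theorem mainTheorem3 (R : realType) (p1 p2 : {poly int}) :
  `|evZ p1 (zeta5 R ^+ 2)| <= 1 ->
  `|evZ p2 (zeta5 R ^+ 2)| <= 1 ->
  evZ p1 (zeta5 R) != evZ p2 (zeta5 R) ->
  ((Num.sqrt 5 - 1) / 2 : R)%:C <= `|evZ p1 (zeta5 R) - evZ p2 (zeta5 R)|.
Proof.
move=> sigma1_le1 sigma2_le1; rewrite -subr_eq0 => w_neq0.
have sigma_le2 : `|evZ p1 (zeta5 R ^+ 2) - evZ p2 (zeta5 R ^+ 2)| <= 2.
  by apply: le_trans (ler_normB _ _) _; rewrite -[2]/(1 + 1); exact: lerD.
rewrite evZB in sigma_le2; rewrite evZB in w_neq0 *.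
have z5 := zeta5_root R; have z_neq1 := zeta5_neq1 R.
have [e0 [e1 [e2 [e3 [e4 He]]]]] := horner_int_root5 R[i] (p1 - p2).
have [A [B HAB]] := sqr_norm_horner5 R[i] e0 e1 e2 e3 e4.
rewrite /evZ !He ?root5_sqr // in w_neq0 sigma_le2 *.
have N := HAB _ z5 z_neq1; rewrite zeta5_trace in N.
have M := HAB _ (root5_sqr z5) (root5_sqr_neq1 z5 z_neq1).
rewrite root5_trace_sqr // zeta5_trace in M.
exact: tau_le_norm N M sigma_le2 w_neq0.
Qed.
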